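(* Let $P\subseteq\omega$ and let $p_0\ge p_1\ge p_2\ge\cdots$ be a sequence of $\mathbb C$-conditions with $\lim_s|p_s|=\infty$ which is 3-generic relative to $P$, and let $f=\bigcup_s\sigma^{p_s}:[\omega]^2\to 2$. Then $f$ is a stable 2-coloring of pairs and $f\oplus P$ does not compute any infinite set homogeneous for $f$.
   Context: $\mathbb C$ is the following notion of forcing. A condition is a triple $p=\langle\sigma^p,l^p,|p|\rangle$ where $|p|\in\omega$, $\sigma^p:[|p|]^2\to 2$ (a coloring of pairs of numbers below $|p|$), $l^p:|p|\to 2\times\omega$, and whenever $l^p(x)=\langle i,z\rangle$, $\sigma^p(x,y)$ is defined and $y\ge z$, then $\sigma^p(x,y)=i$. A condition $q$ extends $p$ ($q\le p$) if $|q|\ge|p|$, $\sigma^q\supseteq\sigma^p$ and $l^q\supseteq l^p$. A descending sequence $(p_s)$ is 3-generic relative to $P$ if for every set $W$ of conditions that is $\Sigma^0_3$-definable in $P$, either some $p_s$ lies in $W$ or some $p_s$ has no extension in $W$. Here $f(x,y)$ means $f(\{x,y\})$ for $x<y$; a coloring is stable if $\lim_u f(x,u)$ exists for all $x$; an infinite set $H$ is homogeneous for $f$ if $f$ is constant on $[H]^2$; $A\oplus B=\{2x:x\in A\}\cup\{2y+1:y\in B\}$. *)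

(* Computability relative to an oracle is modelled by
   Kleene's mu-recursive functions with an oracle (relational semantics). *)
From Stdlib Require Import Arith List.
Import ListNotations.

Definition pair (x y : nat) : nat := (x + y) * S (x + y) / 2 + y.
Fixpoint encode_list (l : list nat) : nat :=
  match l with [] => 0 | x :: r => S (pair x (encode_list r)) end.

Inductive code : Type :=
| Zero | Succ | Proj (i : nat) | Orac
| Comp (f : code) (gs : list code)
| Prec (f g : code)
| Mu (f : code).

Inductive eval (A : nat -> Prop) : code -> list nat -> nat -> Prop :=
| eZero xs : eval A Zero xs 0
| eSucc xs : eval A Succ xs (S (hd 0 xs))
| eProj i xs : eval A (Proj i) xs (nth i xs 0)
| eOracT xs : A (hd 0 xs) -> eval A Orac xs 1
| eOracF xs : ~ A (hd 0 xs) -> eval A Orac xs 0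
| eComp f gs xs ys y :
    evals A gs xs ys -> eval A f ys y -> eval A (Comp f gs) xs y
| ePrec0 f g xs y : eval A f xs y -> eval A (Prec f g) (0 :: xs) y
| ePrecS f g n xs r y :
    eval A (Prec f g) (n :: xs) r -> eval A g (n :: r :: xs) y ->
    eval A (Prec f g) (S n :: xs) y
| eMu f xs n :
    eval A f (n :: xs) 0 ->
    (forall m, m < n -> exists k, eval A f (m :: xs) (S k)) ->
    eval A (Mu f) xs n
with evals (A : nat -> Prop) : list code -> list nat -> list nat -> Prop :=
| esNil xs : evals A [] xs []
| esCons g gs xs y ys :
    eval A g xs y -> evals A gs xs ys -> evals A (g :: gs) xs (y :: ys).

Definition computable_from (A H : nat -> Prop) : Prop :=
  exists e : code, forall x,
    (H x -> eval A e [x] 1) /\ (~ H x -> eval A e [x] 0).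

Definition Sigma03 (P S : nat -> Prop) : Prop :=
  exists R : nat -> Prop, computable_from P R /\
    forall n, S n <-> exists a, forall b, exists c, R (encode_list [n; a; b; c]).

(* A condition: length |p|, sigma^p (meaningful on x < y < |p|),
   l^p (meaningful on x < |p|); colors 2 = bool. *)
Record cond : Type := mkCond {
  len : nat;
  sig : nat -> nat -> bool;
  lab : nat -> bool * nat }.

Definition valid (p : cond) : Prop :=
  forall x y, x < y -> y < len p -> snd (lab p x) <= y ->
    sig p x y = fst (lab p x).

Definition extends (q p : cond) : Prop :=
  len p <= len q /\
  (forall x y, x < y -> y < len p -> sig q x y = sig p x y) /\
  (forall x, x < len p -> lab q x = lab p x).

Definition b2n (b : bool) : nat := if b then 1 else 0.

(* Canonical natural-number code of a condition (depends only on its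
   meaningful finite data). *)
Definition code_cond (p : cond) : nat :=
  encode_list
    [len p;
     encode_list (flat_map (fun y => map (fun x => b2n (sig p x y)) (seq 0 y))
                           (seq 0 (len p)));
     encode_list (map (fun x => pair (b2n (fst (lab p x))) (snd (lab p x)))
                      (seq 0 (len p)))].

(* A descending sequence of conditions that is 3-generic relative to P:
   W ranges over sets of conditions Sigma^0_3-definable in P, i.e.
   W = {q | S (code_cond q)} with S Sigma^0_3 in P. *)
Definition three_generic (P : nat -> Prop) (ps : nat -> cond) : Prop :=
  forall S : nat -> Prop, Sigma03 P S ->
    (exists s, S (code_cond (ps s))) \/
    (exists s, ~ exists q, valid q /\ extends q (ps s) /\ S (code_cond q)).

Definition stable (f : nat -> nat -> bool) : Prop :=
  forall x, exists c N, forall u, N <= u -> x < u -> f x u = c.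

Definition infinite (H : nat -> Prop) : Prop :=
  forall n, exists m, n <= m /\ H m.

Definition homogeneous (f : nat -> nat -> bool) (H : nat -> Prop) : Prop :=
  infinite H /\ exists c, forall x y, H x -> H y -> x < y -> f x y = c.

(* The coloring f of pairs as a subset of omega: codes of pairs x<y colored 1. *)
Definition coloring_set (f : nat -> nat -> bool) (n : nat) : Prop :=
  exists x y, x < y /\ n = pair x y /\ f x y = true.

Definition join (A B : nat -> Prop) (n : nat) : Prop :=
  (Nat.even n = true /\ A (Nat.div2 n)) \/ (Nat.even n = false /\ B (Nat.div2 n)).

(* Suppose [f (+) P] computes an infinite [f]-homogeneous set [H] via the
   program [e].  Call a condition [q] decisive for [e] if either [e], run
   with the finite oracle [q (+) P], already accepts three numbers
   [x1 < x2 < x3 < |q|] with [sigma^q(x1,x2) <> sigma^q(x2,x3)], or [q]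
   forces [e] to accept nothing above some bound [m].  Decisiveness is
   Sigma^0_3 in [P] and dense: below any condition, extend three times to
   make [e] accept [x1 < x2 < x3]; after accepting [x1], label all new
   numbers ([x1] included) with colour 0, after [x2] with colour 1, so
   that [sigma(x1,x2) = 0] and [sigma(x2,x3) = 1].  Hence genericity puts some
   [p_s] in the decisive set.  The first alternative contradicts the
   homogeneity of [H], the second its infiniteness, since by the use
   principle each accepted [x] in [H] is accepted from a long enough
   [p_t].  Stability holds because the label of [x] fixes [f(x,y)] for all
   large [y]. *)
From Stdlib Require Import Arith List Lia Bool Classical ClassicalEpsilon.
Import ListNotations.

(** * Arithmetic with oracle programs *)

Lemma eval_eq_output A e xs v w : eval A e xs v -> v = w -> eval A e xs w.
Proof. intros H ->; exact H. Qed.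

(* The premise of [eMu] is nested under an existential, so the scheme
   generated by [Scheme] gives no induction hypothesis for it. *)
Definition eval_mutual_ind (A : nat -> Prop)
  (Pe : code -> list nat -> nat -> Prop) (Ps : list code -> list nat -> list nat -> Prop)
  (hZero : forall xs, Pe Zero xs 0)
  (hSucc : forall xs, Pe Succ xs (S (hd 0 xs)))
  (hProj : forall i xs, Pe (Proj i) xs (nth i xs 0))
  (hOracT : forall xs, A (hd 0 xs) -> Pe Orac xs 1)
  (hOracF : forall xs, ~ A (hd 0 xs) -> Pe Orac xs 0)
  (hComp : forall f gs xs ys y, evals A gs xs ys -> Ps gs xs ys ->
     eval A f ys y -> Pe f ys y -> Pe (Comp f gs) xs y)
  (hPrec0 : forall f g xs y, eval A f xs y -> Pe f xs y -> Pe (Prec f g) (0 :: xs) y)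
  (hPrecS : forall f g n xs r y, eval A (Prec f g) (n :: xs) r -> Pe (Prec f g) (n :: xs) r ->
     eval A g (n :: r :: xs) y -> Pe g (n :: r :: xs) y -> Pe (Prec f g) (S n :: xs) y)
  (hMu : forall f xs n, eval A f (n :: xs) 0 -> Pe f (n :: xs) 0 ->
     (forall m, m < n -> exists k, eval A f (m :: xs) (S k) /\ Pe f (m :: xs) (S k)) ->
     Pe (Mu f) xs n)
  (hNil : forall xs, Ps [] xs [])
  (hCons : forall g gs xs y ys, eval A g xs y -> Pe g xs y -> evals A gs xs ys -> Ps gs xs ys ->
     Ps (g :: gs) xs (y :: ys)) :
  forall e xs v, eval A e xs v -> Pe e xs v :=
 fix ev e xs v (d : eval A e xs v) {struct d} : Pe e xs v :=
  match d in eval _ e xs v return Pe e xs v with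
  | eZero _ xs => hZero xs
  | eSucc _ xs => hSucc xs
  | eProj _ i xs => hProj i xs
  | eOracT _ xs h => hOracT xs h
  | eOracF _ xs h => hOracF xs h
  | eComp _ f gs xs ys y d1 d2 => hComp f gs xs ys y d1 (evs gs xs ys d1) d2 (ev f ys y d2)
  | ePrec0 _ f g xs y d1 => hPrec0 f g xs y d1 (ev f xs y d1)
  | ePrecS _ f g n xs r y d1 d2 => hPrecS f g n xs r y d1 (ev _ _ _ d1) d2 (ev _ _ _ d2)
  | eMu _ f xs n d1 h => hMu f xs n d1 (ev _ _ _ d1)
      (fun m hm => match h m hm with ex_intro _ k dk => ex_intro _ k (conj dk (ev _ _ _ dk)) end)
  end
with evs gs xs ys (d : evals A gs xs ys) {struct d} : Ps gs xs ys :=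
  match d in evals _ gs xs ys return Ps gs xs ys with
  | esNil _ xs => hNil xs
  | esCons _ g gs xs y ys d1 d2 => hCons g gs xs y ys d1 (ev _ _ _ d1) d2 (evs _ _ _ d2)
  end
  for ev.

Lemma eval_deterministic A e xs v w : eval A e xs v -> eval A e xs w -> v = w.
Proof.
  intro H; revert w; revert e xs v H.
  apply (eval_mutual_ind A (fun e xs v => forall w, eval A e xs w -> v = w)
                           (fun gs xs ys => forall zs, evals A gs xs zs -> ys = zs)).
  all: intros.
  all: match goal with
       | H : eval _ _ _ _ |- _ => inversion H; subst
       | H : evals _ _ _ _ |- _ => inversion H; subst end.
  all: try reflexivity; try contradiction.
  all: try (repeat match goal with
         | IH : forall w, eval _ ?e ?xs w -> _ = w, H : eval _ ?e ?xs _ |- _ => apply IH in H; subst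
         | IH : forall zs, evals _ ?e ?xs zs -> _ = zs, H : evals _ ?e ?xs _ |- _ => apply IH in H; subst
         end; auto; fail).
  all: try (match goal with Hs : evals _ (_ :: _) _ _ |- _ => inversion Hs; subst; f_equal; eauto end; fail).
  (* [Mu]: two distinct outputs would each be a zero below the other. *)
  destruct (lt_eq_lt_dec n w) as [[Hl|Hl]|Hl]; auto.
  - destruct (H5 _ Hl) as [k Hk]. apply H0 in Hk. discriminate.
  - destruct (H1 _ Hl) as [k [_ Hk]]. apply Hk in H4. discriminate.
Qed.

Fixpoint CONST c := match c with 0 => Zero | S c => Comp Succ [CONST c] end.
Arguments CONST : simpl never.

Lemma eval_CONST A c xs : eval A (CONST c) xs c.
Proof.
  induction c; [constructor|]. econstructor; [repeat econstructor; eauto|constructor].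
Qed.

Lemma eval_Comp1 A f g xs a v : eval A g xs a -> eval A f [a] v -> eval A (Comp f [g]) xs v.
Proof. intros. econstructor; eauto. repeat econstructor; eauto. Qed.
Lemma eval_Comp2 A f g h xs a b v : eval A g xs a -> eval A h xs b -> eval A f [a;b] v ->
  eval A (Comp f [g;h]) xs v.
Proof. intros. econstructor; eauto. repeat econstructor; eauto. Qed.
Lemma eval_Comp3 A f g h k xs a b c v : eval A g xs a -> eval A h xs b -> eval A k xs c ->
  eval A f [a;b;c] v -> eval A (Comp f [g;h;k]) xs v.
Proof. intros. econstructor; eauto. repeat econstructor; eauto. Qed.

Lemma eval_Prec_iter A f g xs (h : nat -> nat) :
  eval A f xs (h 0) -> (forall i, eval A g (i :: h i :: xs) (h (S i))) ->
  forall m, eval A (Prec f g) (m :: xs) (h m).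
Proof. intros Hf Hg m; induction m; econstructor; eauto. Qed.

Fixpoint projs a b := match b with 0 => [] | S b => Proj a :: projs (S a) b end.

Lemma evals_projs A l pre post : evals A (projs (length pre) (length l)) (pre ++ l ++ post) l.
Proof.
  revert pre; induction l; intros; simpl; constructor.
  - eapply eval_eq_output. constructor. rewrite app_nth2, Nat.sub_diag by lia. reflexivity.
  - specialize (IHl (pre ++ [a])). rewrite length_app, <- app_assoc, Nat.add_1_r in IHl. exact IHl.
Qed.

Lemma evals_projs_suffix A pre l k j :
  length pre = k -> length l = j -> evals A (projs k j) (pre ++ l) l.
Proof. intros <- <-. pose proof (evals_projs A l pre []). rewrite app_nil_r in H. exact H. Qed.

Definition SUCC g := Comp Succ [g].
Lemma eval_SUCC A g xs a : eval A g xs a -> eval A (SUCC g) xs (S a).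
Proof. intros; eapply eval_Comp1; eauto. constructor. Qed.

Definition PRED g := Comp (Prec Zero (Proj 0)) [g].
Lemma eval_PRED A g xs a : eval A g xs a -> eval A (PRED g) xs (pred a).
Proof.
  intros; eapply eval_Comp1; eauto.
  apply (eval_Prec_iter A _ _ _ pred); constructor.
Qed.

Definition ADD g h := Comp (Prec (Proj 0) (SUCC (Proj 1))) [g;h].
Lemma eval_ADD A g h xs a b : eval A g xs a -> eval A h xs b -> eval A (ADD g h) xs (a + b).
Proof.
  intros; eapply eval_Comp2; eauto.
  apply (eval_Prec_iter A _ _ _ (fun i => i + b)); [constructor|].
  intro; apply eval_SUCC; constructor.
Qed.

Definition MUL g h := Comp (Prec Zero (ADD (Proj 1) (Proj 2))) [g;h].
Lemma eval_MUL A g h xs a b : eval A g xs a -> eval A h xs b -> eval A (MUL g h) xs (a * b).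
Proof.
  intros; eapply eval_Comp2; eauto.
  apply (eval_Prec_iter A _ _ _ (fun i => i * b)); [constructor|].
  intro; eapply eval_eq_output. apply eval_ADD; constructor. simpl; lia.
Qed.

Definition SUB g h := Comp (Prec (Proj 0) (PRED (Proj 1))) [h;g].
Lemma eval_SUB A g h xs a b : eval A g xs a -> eval A h xs b -> eval A (SUB g h) xs (a - b).
Proof.
  intros; eapply eval_Comp2; eauto.
  apply (eval_Prec_iter A _ _ _ (fun i => a - i)).
  - eapply eval_eq_output. constructor. simpl; lia.
  - intro; eapply eval_eq_output. apply eval_PRED; constructor. simpl; lia.
Qed.

Definition NZ g := Comp (Prec Zero (CONST 1)) [g].
Lemma eval_NZ A g xs a : eval A g xs a -> eval A (NZ g) xs (b2n (negb (a =? 0))).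
Proof.
  intros; eapply eval_Comp1; eauto.
  apply (eval_Prec_iter A _ _ _ (fun i => b2n (negb (i =? 0)))); [constructor|].
  intro; apply eval_CONST.
Qed.

Definition NOT g := SUB (CONST 1) g.
Lemma eval_NOT A g xs b : eval A g xs (b2n b) -> eval A (NOT g) xs (b2n (negb b)).
Proof.
  intros; eapply eval_eq_output. apply eval_SUB; eauto. apply eval_CONST. destruct b; reflexivity.
Qed.

Definition LT g h := NZ (SUB h g).
Lemma eval_LT A g h xs a b : eval A g xs a -> eval A h xs b -> eval A (LT g h) xs (b2n (a <? b)).
Proof.
  intros; eapply eval_eq_output. apply eval_NZ, eval_SUB; eauto.
  destruct (Nat.ltb_spec a b); destruct (Nat.eqb_spec (b-a) 0); simpl; lia.
Qed.

Definition LE g h := NOT (NZ (SUB g h)).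
Lemma eval_LE A g h xs a b : eval A g xs a -> eval A h xs b -> eval A (LE g h) xs (b2n (a <=? b)).
Proof.
  intros; eapply eval_eq_output. apply eval_NOT, eval_NZ, eval_SUB; eauto.
  destruct (Nat.leb_spec a b); destruct (Nat.eqb_spec (a-b) 0); simpl; lia.
Qed.

Definition EQ g h := NOT (NZ (ADD (SUB g h) (SUB h g))).
Lemma eval_EQ A g h xs a b : eval A g xs a -> eval A h xs b -> eval A (EQ g h) xs (b2n (a =? b)).
Proof.
  intros; eapply eval_eq_output. apply eval_NOT, eval_NZ, eval_ADD; apply eval_SUB; eauto.
  destruct (Nat.eqb_spec a b); destruct (Nat.eqb_spec (a-b+(b-a)) 0); simpl; lia.
Qed.

Lemma eval_EQ_bool A g h xs a b :
  eval A g xs (b2n a) -> eval A h xs (b2n b) -> eval A (EQ g h) xs (b2n (Bool.eqb a b)).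
Proof. intros. eapply eval_eq_output. apply eval_EQ; eauto. destruct a, b; reflexivity. Qed.

Definition AND g h := MUL g h.
Lemma eval_AND A g h xs a b :
  eval A g xs (b2n a) -> eval A h xs (b2n b) -> eval A (AND g h) xs (b2n (a && b)).
Proof. intros; eapply eval_eq_output. apply eval_MUL; eauto. destruct a, b; reflexivity. Qed.

Definition OR g h := NOT (AND (NOT g) (NOT h)).
Lemma eval_OR A g h xs a b :
  eval A g xs (b2n a) -> eval A h xs (b2n b) -> eval A (OR g h) xs (b2n (a || b)).
Proof.
  intros. eapply eval_eq_output. apply eval_NOT, eval_AND; apply eval_NOT; eauto.
  destruct a, b; reflexivity.
Qed.

Definition IF c g h := ADD (MUL c g) (MUL (NOT c) h).
Lemma eval_IF A c g h xs b x y : eval A c xs (b2n b) -> eval A g xs x -> eval A h xs y ->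
  eval A (IF c g h) xs (if b then x else y).
Proof.
  intros; eapply eval_eq_output. apply eval_ADD; apply eval_MUL; eauto; apply eval_NOT; eauto.
  destruct b; simpl; lia.
Qed.

(* [BALL j p] decides [forall i < L, p i] on inputs [L :: xs], [length xs = j]. *)
Definition BALL j p := Prec (CONST 1) (MUL (Proj 1) (NZ (Comp p (Proj 0 :: projs 2 j)))).
Lemma eval_BALL A j p xs (pb : nat -> bool) : length xs = j ->
  (forall i, eval A p (i :: xs) (b2n (pb i))) ->
  forall L, eval A (BALL j p) (L :: xs) (b2n (forallb pb (seq 0 L))).
Proof.
  intros Hj Hp. apply (eval_Prec_iter A _ _ _ (fun L => b2n (forallb pb (seq 0 L)))).
  { apply eval_CONST. }
  intro i. eapply eval_eq_output.
  - apply eval_MUL; [constructor|]. apply eval_NZ.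
    econstructor; [constructor; [constructor|]|apply Hp].
    apply (evals_projs_suffix A [i; _]); auto.
  - rewrite seq_S, forallb_app. simpl. destruct (forallb pb (seq 0 i)), (pb i); reflexivity.
Qed.

(** * Decoding pairs and lists *)

Lemma div2_S i : Nat.div2 (S i) = Nat.div2 i + b2n (2 * S (Nat.div2 i) <=? S i).
Proof.
  pose proof (Nat.div2_odd i) as H1. pose proof (Nat.div2_odd (S i)) as H2.
  rewrite Nat.odd_succ, <- Nat.negb_odd in H2.
  generalize dependent (Nat.div2 (S i)). generalize dependent (Nat.div2 i). intros d H1 e H2.
  destruct (Nat.leb_spec (2 * S d) (S i)); destruct (Nat.odd i); simpl in *; lia.
Qed.

Definition HALF g :=
  Comp (Prec Zero (ADD (Proj 1) (LE (MUL (CONST 2) (SUCC (Proj 1))) (SUCC (Proj 0))))) [g].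
Lemma eval_HALF A g xs a : eval A g xs a -> eval A (HALF g) xs (Nat.div2 a).
Proof.
  intros; eapply eval_Comp1; eauto.
  apply (eval_Prec_iter A _ _ _ Nat.div2); [constructor|]. intro i.
  eapply eval_eq_output; [|symmetry; apply div2_S].
  apply eval_ADD; [constructor|].
  apply eval_LE; [apply eval_MUL; [apply eval_CONST|]|]; apply eval_SUCC; constructor.
Qed.

Lemma even_eqb q : (2 * Nat.div2 q =? q) = Nat.even q.
Proof.
  pose proof (Nat.div2_odd q). rewrite <- Nat.negb_odd.
  destruct (Nat.odd q); simpl in *; [apply Nat.eqb_neq|apply Nat.eqb_eq]; lia.
Qed.

Definition EVEN g := EQ (MUL (CONST 2) (HALF g)) g.
Lemma eval_EVEN A g xs a : eval A g xs a -> eval A (EVEN g) xs (b2n (Nat.even a)).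
Proof.
  intros. rewrite <- even_eqb.
  apply eval_EQ; auto. apply eval_MUL; [apply eval_CONST|apply eval_HALF; auto].
Qed.

Definition tri s := s * S s / 2.

Definition TRI g := HALF (MUL g (SUCC g)).
Lemma eval_TRI A g xs a : eval A g xs a -> eval A (TRI g) xs (tri a).
Proof.
  intros. unfold tri. rewrite <- Nat.div2_div.
  apply eval_HALF, eval_MUL; auto. apply eval_SUCC; auto.
Qed.

Lemma tri_S s : tri (S s) = tri s + S s.
Proof.
  unfold tri. replace (S s * S (S s)) with (s * S s + S s * 2) by lia.
  rewrite Nat.div_add by lia. reflexivity.
Qed.

Lemma tri_mono a b : a <= b -> tri a <= tri b.
Proof. induction 1; [lia|]. rewrite tri_S. lia. Qed.

Fixpoint tri_root j :=
  match j with 0 => 0 | S i => tri_root i + b2n (tri (S (tri_root i)) <=? S i) end.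

Definition TRI_ROOT g :=
  Comp (Prec Zero (ADD (Proj 1) (LE (TRI (SUCC (Proj 1))) (SUCC (Proj 0))))) [g].
Lemma eval_TRI_ROOT A g xs a : eval A g xs a -> eval A (TRI_ROOT g) xs (tri_root a).
Proof.
  intros; eapply eval_Comp1; eauto.
  apply (eval_Prec_iter A _ _ _ tri_root); [constructor|]. intro i.
  apply eval_ADD; [constructor|]. apply eval_LE; [apply eval_TRI|]; apply eval_SUCC; constructor.
Qed.

Lemma tri_root_spec j : tri (tri_root j) <= j < tri (S (tri_root j)).
Proof.
  induction j; [unfold tri; simpl; lia|]. simpl.
  destruct (Nat.leb_spec (tri (S (tri_root j))) (S j)); simpl.
  - rewrite Nat.add_1_r, (tri_S (S (tri_root j))). lia.
  - rewrite Nat.add_0_r. lia.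
Qed.

Lemma tri_root_unique j s : tri s <= j < tri (S s) -> tri_root j = s.
Proof.
  intros H. pose proof (tri_root_spec j).
  destruct (lt_eq_lt_dec (tri_root j) s) as [[Hl|Hl]|Hl]; auto.
  - assert (tri (S (tri_root j)) <= tri s) by (apply tri_mono; lia). lia.
  - assert (tri (S s) <= tri (tri_root j)) by (apply tri_mono; lia). lia.
Qed.

Definition unpair2 j := j - tri (tri_root j).
Definition unpair1 j := tri_root j - unpair2 j.

Definition UNPAIR2 g := SUB g (TRI (TRI_ROOT g)).
Definition UNPAIR1 g := SUB (TRI_ROOT g) (UNPAIR2 g).
Lemma eval_UNPAIR2 A g xs a : eval A g xs a -> eval A (UNPAIR2 g) xs (unpair2 a).
Proof. intros. apply eval_SUB; auto. apply eval_TRI, eval_TRI_ROOT; auto. Qed.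
Lemma eval_UNPAIR1 A g xs a : eval A g xs a -> eval A (UNPAIR1 g) xs (unpair1 a).
Proof. intros. apply eval_SUB; [apply eval_TRI_ROOT|apply eval_UNPAIR2]; auto. Qed.

Lemma unpair_pair x y : unpair1 (pair x y) = x /\ unpair2 (pair x y) = y.
Proof.
  change (pair x y) with (tri (x + y) + y).
  assert (tri_root (tri (x + y) + y) = x + y) by (apply tri_root_unique; rewrite tri_S; lia).
  unfold unpair1, unpair2. rewrite H. lia.
Qed.

Lemma pair_unpair j : pair (unpair1 j) (unpair2 j) = j.
Proof.
  change (pair ?x ?y) with (tri (x + y) + y).
  pose proof (tri_root_spec j). rewrite tri_S in H. unfold unpair1, unpair2.
  replace (tri_root j - (j - tri (tri_root j)) + (j - tri (tri_root j))) with (tri_root j) by lia.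
  lia.
Qed.

Fixpoint code_tail i n := match i with 0 => n | S i => unpair2 (pred (code_tail i n)) end.
Definition code_nth i n := unpair1 (pred (code_tail i n)).

Definition NTH g h :=
  UNPAIR1 (PRED (Comp (Prec (Proj 0) (UNPAIR2 (PRED (Proj 1)))) [g; h])).
Lemma eval_NTH A g h xs a b : eval A g xs a -> eval A h xs b -> eval A (NTH g h) xs (code_nth a b).
Proof.
  intros. apply eval_UNPAIR1, eval_PRED. eapply eval_Comp2; eauto.
  apply (eval_Prec_iter A _ _ _ (fun i => code_tail i b)); [constructor|].
  intro j. apply eval_UNPAIR2, eval_PRED. constructor.
Qed.

Lemma code_nth_encode_list i l : code_nth i (encode_list l) = nth i l 0.
Proof.
  unfold code_nth. revert i; induction l as [|a l IHl]; intro i.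
  - assert (Hnil : forall j, code_tail j 0 = 0)
      by (induction j; simpl; auto; rewrite IHj; exact (proj2 (unpair_pair 0 0))).
    rewrite Hnil. destruct i; exact (proj1 (unpair_pair 0 0)).
  - assert (Htail : forall j, code_tail (S j) (encode_list (a :: l)) = code_tail j (encode_list l)).
    { induction j; [apply unpair_pair|]. simpl in *. rewrite IHj. reflexivity. }
    destruct i; [apply unpair_pair|]. rewrite Htail. apply IHl.
Qed.

(** * Decoding conditions *)

(* [code_cond] lists [sigma(x, y)] for [x < y] row by row in [y], so the
   bit for [(x, y)] sits at position [tri (y - 1) + x]. *)
Definition pair_index x y := tri (pred y) + x.

Definition decode_cond (n : nat) : cond :=
  mkCond (code_nth 0 n)
    (fun x y => code_nth (pair_index x y) (code_nth 1 n) =? 1)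
    (fun x => let v := code_nth x (code_nth 2 n) in (negb (unpair1 v =? 0), unpair2 v)).

Lemma length_flat_rows (F : nat -> nat -> nat) L :
  length (flat_map (fun y => map (fun x => F x y) (seq 0 y)) (seq 0 L)) = tri (pred L).
Proof.
  induction L; [reflexivity|].
  rewrite seq_S, flat_map_app, length_app, IHL. simpl. rewrite app_nil_r, length_map, length_seq.
  destruct L; [reflexivity|]. simpl. rewrite tri_S. lia.
Qed.

Lemma nth_flat_rows (F : nat -> nat -> nat) L x y : x < y -> y < L ->
  nth (pair_index x y) (flat_map (fun y => map (fun x => F x y) (seq 0 y)) (seq 0 L)) 0 = F x y.
Proof.
  induction L; intros Hxy HyL; [lia|].
  rewrite seq_S, flat_map_app. destruct (Nat.eq_dec y L) as [->|].
  - rewrite app_nth2; rewrite length_flat_rows; unfold pair_index; [|lia].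
    replace (tri (pred L) + x - tri (pred L)) with x by lia. simpl. rewrite app_nil_r.
    rewrite nth_indep with (d' := F 0 L) by (rewrite length_map, length_seq; lia).
    rewrite (map_nth (fun x => F x L)), seq_nth by lia. reflexivity.
  - rewrite app_nth1; [apply IHL; lia|]. rewrite length_flat_rows. unfold pair_index.
    destruct y; [lia|]. simpl. assert (tri (S y) <= tri (pred L)) by (apply tri_mono; lia).
    rewrite tri_S in H. lia.
Qed.

Definition cond_equiv (p q : cond) : Prop :=
  len p = len q /\ (forall x y, x < y -> y < len p -> sig p x y = sig q x y) /\
  (forall x, x < len p -> lab p x = lab q x).

Lemma decode_code_cond q : cond_equiv (decode_cond (code_cond q)) q.
Proof.
  unfold code_cond, decode_cond, cond_equiv; cbn [len sig lab].
  rewrite !code_nth_encode_list; simpl. split; [reflexivity|split].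
  - intros x y Hxy Hy. rewrite code_nth_encode_list.
    rewrite (nth_flat_rows (fun x y => b2n (sig q x y))) by lia. destruct (sig q x y); reflexivity.
  - intros x Hx. rewrite code_nth_encode_list.
    rewrite nth_indep with (d' := pair (b2n (fst (lab q 0))) (snd (lab q 0)))
      by (rewrite length_map, length_seq; lia).
    rewrite (map_nth (fun x => pair (b2n (fst (lab q x))) (snd (lab q x)))), seq_nth by lia.
    simpl. destruct (unpair_pair (b2n (fst (lab q x))) (snd (lab q x))) as [-> ->].
    destruct (lab q x) as [[] z]; reflexivity.
Qed.

Lemma cond_equiv_sym p q : cond_equiv p q -> cond_equiv q p.
Proof. intros (H1&H2&H3); split; [|split]; intros; symmetry; [| apply H2 | apply H3]; auto; lia. Qed.

Lemma cond_equiv_valid p q : cond_equiv p q -> valid q -> valid p.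
Proof.
  intros (H1&H2&H3) Hv x y Hxy Hy Hz. rewrite H2, H3 by lia. rewrite H3 in Hz by lia.
  apply Hv; auto; lia.
Qed.

Lemma extends_refl p : extends p p.
Proof. split; [lia|split]; auto. Qed.

Lemma extends_trans p q r : extends p q -> extends q r -> extends p r.
Proof.
  intros (H1&H2&H3) (G1&G2&G3); split; [lia|split]; intros;
    [rewrite H2 by lia | rewrite H3 by lia]; auto.
Qed.

Lemma cond_equiv_extends_l p p' q : cond_equiv p p' -> extends p' q -> extends p q.
Proof.
  intros (H1&H2&H3) (G1&G2&G3); split; [lia|split]; intros;
    [rewrite H2 by lia | rewrite H3 by lia]; auto.
Qed.

Lemma cond_equiv_extends_r p q q' : cond_equiv q q' -> extends p q' -> extends p q.
Proof.
  intros (H1&H2&H3) (G1&G2&G3); split; [lia|split]; intros;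
    [rewrite G2, H2 | rewrite G3, H3]; auto; lia.
Qed.

Definition LEN n := NTH (CONST 0) n.
Lemma eval_LEN A g xs a : eval A g xs a -> eval A (LEN g) xs (len (decode_cond a)).
Proof. intros; apply eval_NTH; auto. apply eval_CONST. Qed.

Definition SIG n x y := EQ (NTH (ADD (TRI (PRED y)) x) (NTH (CONST 1) n)) (CONST 1).
Lemma eval_SIG A n x y xs a b c : eval A n xs a -> eval A x xs b -> eval A y xs c ->
  eval A (SIG n x y) xs (b2n (sig (decode_cond a) b c)).
Proof.
  intros. apply eval_EQ; [|apply eval_CONST]. apply eval_NTH.
  - apply eval_ADD; auto. apply eval_TRI, eval_PRED; auto.
  - apply eval_NTH; auto. apply eval_CONST.
Qed.

Definition LABEL_COLOR n x := NZ (UNPAIR1 (NTH x (NTH (CONST 2) n))).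
Lemma eval_LABEL_COLOR A n x xs a b : eval A n xs a -> eval A x xs b ->
  eval A (LABEL_COLOR n x) xs (b2n (fst (lab (decode_cond a) b))).
Proof. intros. apply eval_NZ, eval_UNPAIR1, eval_NTH; auto. apply eval_NTH; auto. apply eval_CONST. Qed.

Definition LABEL_BOUND n x := UNPAIR2 (NTH x (NTH (CONST 2) n)).
Lemma eval_LABEL_BOUND A n x xs a b : eval A n xs a -> eval A x xs b ->
  eval A (LABEL_BOUND n x) xs (snd (lab (decode_cond a) b)).
Proof. intros. apply eval_UNPAIR2, eval_NTH; auto. apply eval_NTH; auto. apply eval_CONST. Qed.

Definition validb n := let q := decode_cond n in
  forallb (fun x => forallb (fun y =>
     negb ((x <? y) && (snd (lab q x) <=? y)) || Bool.eqb (sig q x y) (fst (lab q x)))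
   (seq 0 (len q))) (seq 0 (len q)).

Lemma validb_spec n : validb n = true <-> valid (decode_cond n).
Proof.
  unfold validb, valid. rewrite forallb_forall. split.
  - intros H x y Hxy Hy Hz. specialize (H x ltac:(apply in_seq; lia)).
    rewrite forallb_forall in H. specialize (H y ltac:(apply in_seq; lia)).
    apply Nat.ltb_lt in Hxy. apply Nat.leb_le in Hz. rewrite Hxy, Hz in H.
    apply Bool.eqb_prop in H. auto.
  - intros H x Hx. rewrite forallb_forall. intros y Hy. apply in_seq in Hx, Hy.
    destruct (Nat.ltb_spec x y); destruct (Nat.leb_spec (snd (lab (decode_cond n) x)) y);
      cbn [andb negb orb]; auto.
    rewrite H by lia. apply Bool.eqb_reflx.
Qed.

Definition VALID :=
  let body := OR (NOT (AND (LT (Proj 1) (Proj 0)) (LE (LABEL_BOUND (Proj 2) (Proj 1)) (Proj 0))))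
                 (EQ (SIG (Proj 2) (Proj 1) (Proj 0)) (LABEL_COLOR (Proj 2) (Proj 1))) in
  Comp (BALL 1 (Comp (BALL 2 body) [LEN (Proj 1); Proj 0; Proj 1])) [LEN (Proj 0); Proj 0].

Lemma eval_VALID A n : eval A VALID [n] (b2n (validb n)).
Proof.
  eapply eval_Comp2; [apply eval_LEN; constructor|constructor|].
  apply eval_BALL; auto. intro x.
  eapply eval_Comp3; [apply eval_LEN; constructor|constructor|constructor|].
  apply eval_BALL; auto. intro y. apply eval_OR.
  - apply eval_NOT, eval_AND; [apply eval_LT|apply eval_LE; [apply eval_LABEL_BOUND|]]; constructor.
  - apply eval_EQ_bool; [apply eval_SIG|apply eval_LABEL_COLOR]; constructor.
Qed.

Definition extendsb r n := let p := decode_cond r in let q := decode_cond n in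
  (len q <=? len p) &&
  (forallb (fun x => forallb (fun y => negb (x <? y) || Bool.eqb (sig p x y) (sig q x y))
     (seq 0 (len q))) (seq 0 (len q)) &&
   forallb (fun x => Bool.eqb (fst (lab p x)) (fst (lab q x)) && (snd (lab p x) =? snd (lab q x)))
     (seq 0 (len q))).

Lemma extendsb_spec r n : extendsb r n = true <-> extends (decode_cond r) (decode_cond n).
Proof.
  unfold extendsb, extends. rewrite !andb_true_iff, !forallb_forall, Nat.leb_le. split.
  - intros (H1&H2&H3). split; auto. split.
    + intros x y Hxy Hy. specialize (H2 x ltac:(apply in_seq; lia)).
      rewrite forallb_forall in H2. specialize (H2 y ltac:(apply in_seq; lia)).
      apply Nat.ltb_lt in Hxy. rewrite Hxy in H2. apply Bool.eqb_prop; auto.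
    + intros x Hx. specialize (H3 x ltac:(apply in_seq; lia)). apply andb_true_iff in H3.
      destruct H3 as [E1 E2]. apply Bool.eqb_prop in E1. apply Nat.eqb_eq in E2.
      destruct (lab (decode_cond r) x), (lab (decode_cond n) x); simpl in *; subst; auto.
  - intros (H1&H2&H3). split; auto. split.
    + intros x Hx. apply in_seq in Hx. rewrite forallb_forall. intros y Hy. apply in_seq in Hy.
      destruct (Nat.ltb_spec x y); cbn [andb negb orb]; auto. rewrite H2 by lia. apply Bool.eqb_reflx.
    + intros x Hx. apply in_seq in Hx. rewrite H3 by lia. rewrite Bool.eqb_reflx, Nat.eqb_refl.
      reflexivity.
Qed.

Definition EXTENDS :=
  let sig_body := OR (NOT (LT (Proj 1) (Proj 0)))
                     (EQ (SIG (Proj 2) (Proj 1) (Proj 0)) (SIG (Proj 3) (Proj 1) (Proj 0))) in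
  let lab_body := AND (EQ (LABEL_COLOR (Proj 1) (Proj 0)) (LABEL_COLOR (Proj 2) (Proj 0)))
                      (EQ (LABEL_BOUND (Proj 1) (Proj 0)) (LABEL_BOUND (Proj 2) (Proj 0))) in
  AND (LE (LEN (Proj 1)) (LEN (Proj 0)))
    (AND (Comp (BALL 2 (Comp (BALL 3 sig_body) [LEN (Proj 2); Proj 0; Proj 1; Proj 2]))
           [LEN (Proj 1); Proj 0; Proj 1])
         (Comp (BALL 2 lab_body) [LEN (Proj 1); Proj 0; Proj 1])).

Lemma eval_EXTENDS A r n : eval A EXTENDS [r; n] (b2n (extendsb r n)).
Proof.
  apply eval_AND; [apply eval_LE; apply eval_LEN; constructor|]. apply eval_AND.
  - eapply eval_Comp3; [apply eval_LEN; constructor|constructor|constructor|].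
    apply eval_BALL; auto. intro x.
    econstructor.
    { constructor; [apply eval_LEN; constructor|]. repeat (constructor; [constructor|]). constructor. }
    apply eval_BALL; auto. intro y. apply eval_OR.
    + apply eval_NOT, eval_LT; constructor.
    + apply eval_EQ_bool; apply eval_SIG; constructor.
  - eapply eval_Comp3; [apply eval_LEN; constructor|constructor|constructor|].
    apply eval_BALL; auto. intro x. apply eval_AND.
    + apply eval_EQ_bool; apply eval_LABEL_COLOR; constructor.
    + apply eval_EQ; apply eval_LABEL_BOUND; constructor.
Qed.

(** * Finite oracles and the use principle *)

Definition decide (P : nat -> Prop) (d : nat) : bool :=
  if excluded_middle_informative (P d) then true else false.

Lemma decide_spec P d : decide P d = true <-> P d.
Proof. unfold decide; destruct (excluded_middle_informative (P d)); split; auto; discriminate. Qed.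

(* The part of the oracle [coloring_set f (+) P] known from a condition [r]
   with [f] extending [sig r]: query [2 j] asks whether [unpair j] is a pair
   [x < y] of colour 1, and is unanswered when [y >= len r]. *)
Definition cond_oracle (P : nat -> Prop) (r : cond) (q : nat) : option bool :=
  if Nat.even q then
    (let j := Nat.div2 q in
     if unpair1 j <? unpair2 j then
       (if unpair2 j <? len r then Some (sig r (unpair1 j) (unpair2 j)) else None)
     else Some false)
  else Some (decide P (Nat.div2 q)).

Inductive peval (O : nat -> option bool) : code -> list nat -> nat -> Prop :=
| pZero xs : peval O Zero xs 0
| pSucc xs : peval O Succ xs (S (hd 0 xs))
| pProj i xs : peval O (Proj i) xs (nth i xs 0)
| pOrac xs b : O (hd 0 xs) = Some b -> peval O Orac xs (b2n b)
| pComp f gs xs ys y :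
    pevals O gs xs ys -> peval O f ys y -> peval O (Comp f gs) xs y
| pPrec0 f g xs y : peval O f xs y -> peval O (Prec f g) (0 :: xs) y
| pPrecS f g n xs r y :
    peval O (Prec f g) (n :: xs) r -> peval O g (n :: r :: xs) y ->
    peval O (Prec f g) (S n :: xs) y
| pMu f xs n :
    peval O f (n :: xs) 0 ->
    (forall m, m < n -> exists k, peval O f (m :: xs) (S k)) ->
    peval O (Mu f) xs n
with pevals (O : nat -> option bool) : list code -> list nat -> list nat -> Prop :=
| psNil xs : pevals O [] xs []
| psCons g gs xs y ys :
    peval O g xs y -> pevals O gs xs ys -> pevals O (g :: gs) xs (y :: ys).

Definition peval_mutual_ind (O : nat -> option bool) (Pe : code -> list nat -> nat -> Prop)
  (Ps : list code -> list nat -> list nat -> Prop)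
  (hZero : forall xs, Pe Zero xs 0) (hSucc : forall xs, Pe Succ xs (S (hd 0 xs)))
  (hProj : forall i xs, Pe (Proj i) xs (nth i xs 0))
  (hOrac : forall xs b, O (hd 0 xs) = Some b -> Pe Orac xs (b2n b))
  (hComp : forall f gs xs ys y, pevals O gs xs ys -> Ps gs xs ys ->
     peval O f ys y -> Pe f ys y -> Pe (Comp f gs) xs y)
  (hPrec0 : forall f g xs y, peval O f xs y -> Pe f xs y -> Pe (Prec f g) (0 :: xs) y)
  (hPrecS : forall f g n xs r y, peval O (Prec f g) (n :: xs) r -> Pe (Prec f g) (n :: xs) r ->
     peval O g (n :: r :: xs) y -> Pe g (n :: r :: xs) y -> Pe (Prec f g) (S n :: xs) y)
  (hMu : forall f xs n, peval O f (n :: xs) 0 -> Pe f (n :: xs) 0 ->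
     (forall m, m < n -> exists k, peval O f (m :: xs) (S k) /\ Pe f (m :: xs) (S k)) ->
     Pe (Mu f) xs n)
  (hNil : forall xs, Ps [] xs [])
  (hCons : forall g gs xs y ys, peval O g xs y -> Pe g xs y -> pevals O gs xs ys -> Ps gs xs ys ->
     Ps (g :: gs) xs (y :: ys)) :
  forall e xs v, peval O e xs v -> Pe e xs v :=
 fix ev e xs v (d : peval O e xs v) {struct d} : Pe e xs v :=
  match d in peval _ e xs v return Pe e xs v with
  | pZero _ xs => hZero xs
  | pSucc _ xs => hSucc xs
  | pProj _ i xs => hProj i xs
  | pOrac _ xs b h => hOrac xs b h
  | pComp _ f gs xs ys y d1 d2 => hComp f gs xs ys y d1 (evs gs xs ys d1) d2 (ev f ys y d2)
  | pPrec0 _ f g xs y d1 => hPrec0 f g xs y d1 (ev f xs y d1)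
  | pPrecS _ f g n xs r y d1 d2 => hPrecS f g n xs r y d1 (ev _ _ _ d1) d2 (ev _ _ _ d2)
  | pMu _ f xs n d1 h => hMu f xs n d1 (ev _ _ _ d1)
      (fun m hm => match h m hm with ex_intro _ k dk => ex_intro _ k (conj dk (ev _ _ _ dk)) end)
  end
with evs gs xs ys (d : pevals O gs xs ys) {struct d} : Ps gs xs ys :=
  match d in pevals _ gs xs ys return Ps gs xs ys with
  | psNil _ xs => hNil xs
  | psCons _ g gs xs y ys d1 d2 => hCons g gs xs y ys d1 (ev _ _ _ d1) d2 (evs _ _ _ d2)
  end
  for ev.

Lemma peval_oracle_mono (O O' : nat -> option bool) e xs v :
  (forall q b, O q = Some b -> O' q = Some b) -> peval O e xs v -> peval O' e xs v.
Proof.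
  intro HO. revert e xs v.
  apply (peval_mutual_ind O (peval O') (pevals O')); intros; try (econstructor; eauto; fail).
  constructor; auto. intros m Hm. destruct (H1 m Hm) as [k [_ Hk]]. eauto.
Qed.

Lemma cond_oracle_extends P r r' q b :
  extends r' r -> cond_oracle P r q = Some b -> cond_oracle P r' q = Some b.
Proof.
  intros (H1&H2&H3). unfold cond_oracle. destruct (Nat.even q); auto.
  destruct (Nat.ltb_spec (unpair1 (Nat.div2 q)) (unpair2 (Nat.div2 q))); auto.
  destruct (Nat.ltb_spec (unpair2 (Nat.div2 q)) (len r)); [|discriminate].
  destruct (Nat.ltb_spec (unpair2 (Nat.div2 q)) (len r')); [|lia].
  rewrite H2; auto.
Qed.

Lemma peval_extends P r r' e xs v :
  extends r' r -> peval (cond_oracle P r) e xs v -> peval (cond_oracle P r') e xs v.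
Proof. intros H. apply peval_oracle_mono. intros q b; apply cond_oracle_extends; auto. Qed.

Lemma cond_oracle_equiv P r r' q : cond_equiv r r' -> cond_oracle P r q = cond_oracle P r' q.
Proof.
  intros (H1&H2&H3). unfold cond_oracle. destruct (Nat.even q); auto.
  destruct (Nat.ltb_spec (unpair1 (Nat.div2 q)) (unpair2 (Nat.div2 q))); auto. rewrite H1.
  destruct (Nat.ltb_spec (unpair2 (Nat.div2 q)) (len r')); auto. rewrite H2; auto; lia.
Qed.

Lemma peval_cond_equiv P r r' e xs v :
  cond_equiv r r' -> peval (cond_oracle P r) e xs v -> peval (cond_oracle P r') e xs v.
Proof. intros H. apply peval_oracle_mono. intros q b; rewrite (cond_oracle_equiv P r r'); auto. Qed.

Definition agrees (f : nat -> nat -> bool) (r : cond) :=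
  forall x y, x < y -> y < len r -> f x y = sig r x y.

Lemma cond_oracle_join P f r q b : agrees f r -> cond_oracle P r q = Some b ->
  (b = true <-> join (coloring_set f) P q).
Proof.
  intros Ha. unfold cond_oracle, join. destruct (Nat.even q) eqn:Ev.
  - destruct (Nat.ltb_spec (unpair1 (Nat.div2 q)) (unpair2 (Nat.div2 q))) as [Hl|Hl].
    + destruct (Nat.ltb_spec (unpair2 (Nat.div2 q)) (len r)); [|discriminate].
      intros [= <-]. split.
      * intro Hs. left. split; auto. exists (unpair1 (Nat.div2 q)), (unpair2 (Nat.div2 q)).
        rewrite pair_unpair. repeat split; auto. rewrite Ha; auto.
      * intros [[_ (x&y&Hxy&Hq&Hf)]|[? _]]; [|discriminate].
        rewrite Hq in *. destruct (unpair_pair x y) as [E1 E2]. rewrite E1, E2 in *.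
        rewrite <- Ha; auto.
    + intros [= <-]. split; [discriminate|].
      intros [[_ (x&y&Hxy&Hq&Hf)]|[? _]]; [|discriminate].
      rewrite Hq in Hl. destruct (unpair_pair x y) as [E1 E2]. lia.
  - intros [= <-]. rewrite decide_spec. split; [intro; right; auto|].
    intros [[? _]|[_ ?]]; auto; discriminate.
Qed.

Lemma peval_join P f r e xs v :
  agrees f r -> peval (cond_oracle P r) e xs v -> eval (join (coloring_set f) P) e xs v.
Proof.
  intro Ha. revert e xs v.
  apply (peval_mutual_ind (cond_oracle P r) (eval (join (coloring_set f) P))
                          (evals (join (coloring_set f) P)));
    intros; try (econstructor; eauto; fail).
  - pose proof (cond_oracle_join P f r _ b Ha H) as E. destruct b.
    + constructor. apply E; auto.
    + constructor. intro Hj. apply E in Hj. discriminate.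
  - constructor; auto. intros m Hm. destruct (H1 m Hm) as [k [_ Hk]]. eauto.
Qed.

Lemma finite_max_bound (n : nat) (Q : nat -> nat -> Prop) :
  (forall m N N', Q m N -> N <= N' -> Q m N') ->
  (forall m, m < n -> exists N, Q m N) -> exists N, forall m, m < n -> Q m N.
Proof.
  intros Hmono. induction n; intros H; [exists 0; intros; lia|].
  destruct IHn as [N HN]; [intros; apply H; lia|].
  destruct (H n) as [N' HN']; [lia|].
  exists (max N N'). intros m Hm. destruct (Nat.eq_dec m n) as [->|].
  - eapply Hmono; eauto; lia.
  - eapply Hmono; [apply HN|]; lia.
Qed.

Lemma cond_oracle_answers_join P f r q v :
  agrees f r -> unpair2 (Nat.div2 q) < len r -> b2n (decide (join (coloring_set f) P) q) = v ->
  exists b, cond_oracle P r q = Some b /\ b2n b = v.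
Proof.
  intros Ha Hq Hv.
  assert (exists b, cond_oracle P r q = Some b) as [b Hb].
  { unfold cond_oracle. destruct (Nat.even q); eauto.
    destruct (_ <? _); eauto. destruct (Nat.ltb_spec (unpair2 (Nat.div2 q)) (len r)); eauto; lia. }
  exists b; split; auto. subst v. f_equal.
  apply eq_true_iff_eq. rewrite decide_spec. apply (cond_oracle_join P f r); auto.
Qed.

Lemma use_principle P f e xs v : eval (join (coloring_set f) P) e xs v ->
  exists N, forall r, N <= len r -> agrees f r -> peval (cond_oracle P r) e xs v.
Proof.
  revert e xs v.
  apply (eval_mutual_ind (join (coloring_set f) P)
    (fun e xs v => exists N, forall r, N <= len r -> agrees f r -> peval (cond_oracle P r) e xs v)
    (fun gs xs ys => exists N, forall r, N <= len r -> agrees f r -> pevals (cond_oracle P r) gs xs ys));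
    intros.
  all: try (exists 0; intros; constructor; fail).
  all: try (destruct H0 as [N1 K1], H2 as [N2 K2]; exists (max N1 N2); intros;
            econstructor; [apply K1|apply K2]; auto; lia).
  - exists (S (unpair2 (Nat.div2 (hd 0 xs)))). intros r Hr Ha.
    destruct (cond_oracle_answers_join P f r (hd 0 xs) 1 Ha ltac:(lia)) as [b [Hb Hv]].
    { apply decide_spec in H. rewrite H. reflexivity. }
    rewrite <- Hv. constructor; auto.
  - exists (S (unpair2 (Nat.div2 (hd 0 xs)))). intros r Hr Ha.
    destruct (cond_oracle_answers_join P f r (hd 0 xs) 0 Ha ltac:(lia)) as [b [Hb Hv]].
    { destruct (decide _ _) eqn:E; auto. apply decide_spec in E. contradiction. }
    rewrite <- Hv. constructor; auto.
  - destruct H0 as [N1 K1]. exists N1; intros. constructor; auto.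
  - destruct H0 as [N1 K1].
    destruct (finite_max_bound n (fun m N => exists k, forall r, N <= len r -> agrees f r ->
                peval (cond_oracle P r) f0 (m :: xs) (S k))) as [N2 K2].
    + intros m N N' [k Hk] HN. exists k; intros; apply Hk; auto; lia.
    + intros m Hm. destruct (H1 m Hm) as [k [_ [N HN]]]. eauto.
    + exists (max N1 N2). intros r Hr Ha. constructor; [apply K1; auto; lia|].
      intros m Hm. destruct (K2 m Hm) as [k Hk]. exists k. apply Hk; auto; lia.
Qed.

(** * A fuel-bounded evaluator and its program *)

Definition code_nested_ind (Q : code -> Prop) (hZ : Q Zero) (hS : Q Succ)
  (hP : forall i, Q (Proj i)) (hO : Q Orac)
  (hC : forall f gs, Q f -> Forall Q gs -> Q (Comp f gs))
  (hPr : forall f g, Q f -> Q g -> Q (Prec f g)) (hMu : forall f, Q f -> Q (Mu f)) :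
  forall e, Q e :=
  fix F e := match e return Q e with
  | Zero => hZ | Succ => hS | Proj i => hP i | Orac => hO
  | Comp f gs => hC f gs (F f) ((fix G l := match l return Forall Q l with
        [] => Forall_nil Q | g :: l => Forall_cons g (F g) (G l) end) gs)
  | Prec f g => hPr f g (F f) (F g)
  | Mu f => hMu f (F f) end.

(* Outputs of the evaluator below are shifted by one: [S v] means output
   [v], and [0] means "no answer" (an unanswered query or exhausted fuel). *)
Definition option_code (o : option bool) := match o with Some b => S (b2n b) | None => 0 end.

Definition COND_ORACLE :=
  let q := Proj 2 in let j := HALF q in let x := UNPAIR1 j in let y := UNPAIR2 j in
  IF (EVEN q)
     (IF (LT x y) (IF (LT y (LEN (Proj 1))) (SUCC (SIG (Proj 1) x y)) (CONST 0)) (CONST 1))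
     (SUCC (Comp Orac [j])).

Lemma eval_COND_ORACLE P t n xs :
  eval P COND_ORACLE (t :: n :: xs) (option_code (cond_oracle P (decode_cond n) (hd 0 xs))).
Proof.
  unfold COND_ORACLE, cond_oracle. set (q := hd 0 xs).
  assert (Hq : eval P (Proj 2) (t :: n :: xs) q)
    by (eapply eval_eq_output; [constructor|destruct xs; reflexivity]).
  assert (Hx : eval P (UNPAIR1 (HALF (Proj 2))) (t :: n :: xs) (unpair1 (Nat.div2 q)))
    by (apply eval_UNPAIR1, eval_HALF, Hq).
  assert (Hy : eval P (UNPAIR2 (HALF (Proj 2))) (t :: n :: xs) (unpair2 (Nat.div2 q)))
    by (apply eval_UNPAIR2, eval_HALF, Hq).
  assert (HP : eval P Orac [Nat.div2 q] (b2n (decide P (Nat.div2 q)))).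
  { destruct (decide P (Nat.div2 q)) eqn:E; constructor; simpl.
    - apply decide_spec; auto.
    - rewrite <- decide_spec, E. discriminate. }
  eapply eval_eq_output.
  - apply eval_IF; [apply eval_EVEN, Hq| |].
    + apply eval_IF; [apply eval_LT; [exact Hx|exact Hy]| |apply eval_CONST].
      apply eval_IF; [apply eval_LT; [exact Hy|apply eval_LEN; constructor]| |apply eval_CONST].
      apply eval_SUCC, eval_SIG; [constructor|exact Hx|exact Hy].
    + apply eval_SUCC. eapply eval_Comp1; [apply eval_HALF, Hq|exact HP].
  - cbn [nth]. destruct (Nat.even q); [|destruct (decide P (Nat.div2 q)); reflexivity].
    destruct (unpair1 (Nat.div2 q) <? unpair2 (Nat.div2 q)); [|reflexivity].
    destruct (unpair2 (Nat.div2 q) <? len (decode_cond n)); reflexivity.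
Qed.

Definition prec_iter (F : nat) (G : nat -> nat -> nat) : nat -> nat :=
  fix it m := match m with
  | 0 => F
  | S i => let a := it i in if negb (a =? 0) then G i (pred a) else 0 end.

(* Search for the least [m < t] with shifted value [V m = 1] (output [0]):
   state [0] means still searching, [1] a failed subcomputation, [S (S m)]
   success at [m]. *)
Definition mu_search (V : nat -> nat) : nat -> nat :=
  fix it i := match i with
  | 0 => 0
  | S i => let a := it i in
     if negb (a =? 0) then a else (if V i =? 0 then 1 else if V i =? 1 then S (S i) else 0) end.

(* [fuel_eval P k t n e xs] runs [e] on [xs] ([length xs = k]) with oracle
   [cond_oracle P (decode_cond n)], searching below [t] in every [Mu]. *)
Fixpoint fuel_eval P (k t n : nat) (e : code) (xs : list nat) {struct e} : nat :=
  match e with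
  | Zero => 1
  | Succ => S (S (hd 0 xs))
  | Proj i => S (nth i xs 0)
  | Orac => option_code (cond_oracle P (decode_cond n) (hd 0 xs))
  | Comp f gs => let ws := map (fun g => fuel_eval P k t n g xs) gs in
      b2n (forallb (fun w => negb (w =? 0)) ws) * fuel_eval P (length gs) t n f (map pred ws)
  | Prec f g => match k with
      | 0 => 0
      | S k' => prec_iter (fuel_eval P k' t n f (tl xs))
                  (fun i a => fuel_eval P (S k) t n g (i :: a :: tl xs)) (hd 0 xs) end
  | Mu f => let st := mu_search (fun i => fuel_eval P (S k) t n f (i :: xs)) t in
      if 2 <=? st then pred st else 0
  end.

Lemma mu_search_sound V t m :
  mu_search V t = S (S m) -> m < t /\ V m = 1 /\ forall i, i < m -> 2 <= V i.
Proof.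
  induction t; simpl; [discriminate|].
  destruct (mu_search V t) as [|a] eqn:E; simpl.
  - assert (forall i, i < t -> 2 <= V i).
    { clear IHt. intros i Hi. revert E. induction t; simpl; intro E; [lia|].
      destruct (mu_search V t) eqn:E'; simpl in E; [|discriminate].
      destruct (Nat.eqb_spec (V t) 0); [discriminate|].
      destruct (Nat.eqb_spec (V t) 1); [discriminate|].
      destruct (Nat.eq_dec i t) as [->|]; [lia|]. apply IHt; auto; lia. }
    destruct (Nat.eqb_spec (V t) 0); [discriminate|].
    destruct (Nat.eqb_spec (V t) 1); [|discriminate].
    intros [= <-]. repeat split; auto.
  - intro H; destruct (IHt H) as (?&?&?). repeat split; auto.
Qed.

Lemma mu_search_complete V t m :
  m < t -> V m = 1 -> (forall i, i < m -> 2 <= V i) -> mu_search V t = S (S m).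
Proof.
  intros Ht Hm Hi. induction t; [lia|].
  destruct (Nat.eq_dec m t) as [->|]; simpl.
  - assert (Hsearch : forall j, j <= t -> mu_search V j = 0).
    { induction j; simpl; intros; auto. rewrite IHj by lia. simpl.
      destruct (Nat.eqb_spec (V j) 0); [specialize (Hi j); lia|].
      destruct (Nat.eqb_spec (V j) 1); [specialize (Hi j); lia|]. reflexivity. }
    rewrite Hsearch by lia. simpl. rewrite Hm. reflexivity.
  - rewrite IHt by lia. reflexivity.
Qed.

Lemma fuel_eval_sound P e k t n xs v : length xs = k -> fuel_eval P k t n e xs = S v ->
  peval (cond_oracle P (decode_cond n)) e xs v.
Proof.
  revert k t n xs v.
  induction e using code_nested_ind; intros k t n xs v Hk Hr; cbn [fuel_eval] in Hr.
  - injection Hr as <-; constructor.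
  - injection Hr as <-; constructor.
  - injection Hr as <-; constructor.
  - destruct (cond_oracle P (decode_cond n) (hd 0 xs)) eqn:E; simpl in Hr; [|discriminate].
    injection Hr as <-. constructor; auto.
  - set (ws := map (fun g => fuel_eval P k t n g xs) gs) in Hr.
    destruct (forallb (fun w => negb (w =? 0)) ws) eqn:Ef; simpl in Hr; [|discriminate].
    rewrite Nat.add_0_r in Hr.
    econstructor; [|eapply IHe; [|exact Hr]; subst ws; rewrite !length_map; reflexivity].
    subst ws. clear Hr IHe. induction H; simpl in *; constructor.
    + apply andb_prop in Ef as [E1 _].
      destruct (fuel_eval P k t n x xs) eqn:Er; [discriminate|]. simpl. eapply H; eauto.
    + apply IHForall. apply andb_prop in Ef; tauto.
  - destruct k as [|k']; [discriminate|]. destruct xs as [|m rest]; [discriminate|].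
    simpl in Hk, Hr. revert v Hr.
    induction m; intros v Hr; simpl in Hr; [apply pPrec0; eapply IHe1; [|exact Hr]; lia|].
    destruct (prec_iter (fuel_eval P k' t n e1 rest)
                (fun i a => fuel_eval P (S (S k')) t n e2 (i :: a :: rest)) m) as [|r] eqn:E;
      simpl in Hr; [discriminate|].
    econstructor; [apply IHm; eauto|]. eapply IHe2; [|exact Hr]. simpl; lia.
  - set (V := fun i => fuel_eval P (S k) t n e (i :: xs)) in Hr.
    destruct (mu_search V t) as [|[|m]] eqn:E; simpl in Hr; try discriminate.
    injection Hr as <-. apply mu_search_sound in E as (Ht&Hm&Hi).
    constructor; [eapply IHe; [|exact Hm]; simpl; lia|].
    intros i Hi'. specialize (Hi i Hi'). unfold V in Hi.
    destruct (fuel_eval P (S k) t n e (i :: xs)) as [|[|k0]] eqn:Ei; try lia.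
    exists k0. eapply IHe; [|exact Ei]. simpl; lia.
Qed.

Lemma fuel_eval_complete P n e xs v : peval (cond_oracle P (decode_cond n)) e xs v ->
  forall k, length xs = k -> exists t0, forall t, t0 <= t -> fuel_eval P k t n e xs = S v.
Proof.
  revert e xs v.
  apply (peval_mutual_ind (cond_oracle P (decode_cond n))
    (fun e xs v => forall k, length xs = k ->
       exists t0, forall t, t0 <= t -> fuel_eval P k t n e xs = S v)
    (fun gs xs ys => length ys = length gs /\ forall k, length xs = k ->
       exists t0, forall t, t0 <= t -> map (fun g => fuel_eval P k t n g xs) gs = map S ys)).
  all: try (intros; exists 0; reflexivity).
  - intros xs b Hb k _; exists 0; intros; cbn [fuel_eval]. rewrite Hb. reflexivity.
  - intros f gs xs ys y _ [Hl Hgs] _ Hf k Hk.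
    destruct (Hgs k Hk) as [t1 H1]. destruct (Hf (length ys) eq_refl) as [t2 H2].
    exists (max t1 t2). intros t Ht. cbn [fuel_eval]. rewrite H1 by lia.
    rewrite map_map, map_id, <- Hl, H2 by lia.
    assert (Hpos : forallb (fun w => negb (w =? 0)) (map S ys) = true)
      by (clear; induction ys; simpl; auto).
    rewrite Hpos. simpl. lia.
  - intros f g xs y _ Hf k Hk. destruct k as [|k']; [discriminate|].
    destruct (Hf k' ltac:(simpl in Hk; lia)) as [t1 H1]. exists t1. intros t Ht. apply H1; auto.
  - intros f g n0 xs r y _ Hp _ Hg k Hk. destruct k as [|k']; [discriminate|]. simpl in Hk.
    destruct (Hp (S k') ltac:(simpl; lia)) as [t1 H1].
    destruct (Hg (S (S k')) ltac:(simpl; lia)) as [t2 H2].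
    exists (max t1 t2). intros t Ht. specialize (H1 t ltac:(lia)). specialize (H2 t ltac:(lia)).
    cbn [fuel_eval tl hd] in *. cbn [prec_iter]. rewrite H1. exact H2.
  - intros f xs n0 _ Hf Hm k Hk.
    destruct (Hf (S k) ltac:(simpl; lia)) as [t1 H1].
    destruct (finite_max_bound n0 (fun m N => exists k0, forall t, N <= t ->
                fuel_eval P (S k) t n f (m :: xs) = S (S k0))) as [T HT].
    + intros m N N' [k0 Hk0] HN. exists k0; intros; apply Hk0; lia.
    + intros m Hm'. destruct (Hm m Hm') as [k0 [_ Hk0]].
      destruct (Hk0 (S k) ltac:(simpl; lia)) as [t2 H2]. eauto.
    + exists (max T (max t1 (S n0))). intros t Ht. cbn [fuel_eval].
      rewrite (mu_search_complete _ t n0); [reflexivity|lia|apply H1; lia|].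
      intros i Hi. destruct (HT i Hi) as [k0 Hk0]. rewrite Hk0 by lia. lia.
  - intros; split; auto. intros; exists 0; reflexivity.
  - intros g gs xs y ys _ Hg _ [Hl Hgs]. split; [simpl; auto|].
    intros k Hk. destruct (Hg k Hk) as [t1 H1]. destruct (Hgs k Hk) as [t2 H2].
    exists (max t1 t2). intros t Ht. simpl. rewrite H1, H2 by lia. reflexivity.
Qed.

Fixpoint ALL_POS (l : list code) :=
  match l with [] => CONST 1 | g :: l => MUL (NZ g) (ALL_POS l) end.

Lemma eval_ALL_POS A gs xs ws : evals A gs xs ws ->
  eval A (ALL_POS gs) xs (b2n (forallb (fun w => negb (w =? 0)) ws)).
Proof.
  induction 1; simpl; [apply eval_CONST|].
  eapply eval_eq_output; [apply eval_MUL; [apply eval_NZ|]; eauto|].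
  destruct (negb (y =? 0)); simpl; lia.
Qed.

Lemma evals_map_PRED A gs xs ws : evals A gs xs ws -> evals A (map PRED gs) xs (map pred ws).
Proof. induction 1; simpl; constructor; auto. apply eval_PRED; auto. Qed.

Definition PREC_STEP g' k' := IF (NZ (Proj 1))
  (Comp g' (Proj 2 :: Proj 3 :: Proj 0 :: PRED (Proj 1) :: projs 4 k')) (CONST 0).
Definition MU_STEP f' k := let v := Comp f' (Proj 2 :: Proj 3 :: Proj 0 :: projs 4 k) in
  IF (NZ (Proj 1)) (Proj 1)
     (IF (EQ v (CONST 0)) (CONST 1) (IF (EQ v (CONST 1)) (SUCC (SUCC (Proj 0))) (CONST 0))).

Lemma eval_MU_STEP_iter P f' k t n xs V : length xs = k ->
  (forall i, eval P f' (t :: n :: i :: xs) (V i)) ->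
  eval P (Comp (Prec Zero (MU_STEP f' k)) (Proj 0 :: Proj 0 :: Proj 1 :: projs 2 k))
    (t :: n :: xs) (mu_search V t).
Proof.
  intros Hk Hf. econstructor.
  - do 3 (constructor; [constructor|]). apply (evals_projs_suffix P [t; n]); auto.
  - apply (eval_Prec_iter P _ _ _ (mu_search V)); [constructor|]. intro i.
    assert (Hv : eval P (Comp f' (Proj 2 :: Proj 3 :: Proj 0 :: projs 4 k))
                   (i :: mu_search V i :: t :: n :: xs) (V i)).
    { econstructor; [|apply Hf].
      do 3 (constructor; [constructor|]). apply (evals_projs_suffix P [i; _; t; n]); auto. }
    unfold MU_STEP. apply eval_IF; [apply eval_NZ; constructor|constructor|].
    apply eval_IF; [apply eval_EQ; [exact Hv|apply eval_CONST]|apply eval_CONST|].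
    apply eval_IF; [apply eval_EQ; [exact Hv|apply eval_CONST]| |apply eval_CONST].
    apply eval_SUCC, eval_SUCC; constructor.
Qed.

Fixpoint FUEL_EVAL (k : nat) (e : code) {struct e} : code :=
  match e with
  | Zero => CONST 1
  | Succ => SUCC (SUCC (Proj 2))
  | Proj i => SUCC (Proj (S (S i)))
  | Orac => COND_ORACLE
  | Comp f gs => MUL (ALL_POS (map (FUEL_EVAL k) gs))
      (Comp (FUEL_EVAL (length gs) f) (Proj 0 :: Proj 1 :: map PRED (map (FUEL_EVAL k) gs)))
  | Prec f g => match k with
      | 0 => Zero
      | S k' => Comp (Prec (FUEL_EVAL k' f) (PREC_STEP (FUEL_EVAL (S k) g) k'))
                  (Proj 2 :: Proj 0 :: Proj 1 :: projs 3 k') end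
  | Mu f => let st := Comp (Prec Zero (MU_STEP (FUEL_EVAL (S k) f) k))
                           (Proj 0 :: Proj 0 :: Proj 1 :: projs 2 k) in
      IF (LE (CONST 2) st) (PRED st) (CONST 0)
  end.

Lemma eval_FUEL_EVAL P e k t n xs : length xs = k ->
  eval P (FUEL_EVAL k e) (t :: n :: xs) (fuel_eval P k t n e xs).
Proof.
  revert k t n xs.
  induction e using code_nested_ind; intros k t n xs Hk; cbn [FUEL_EVAL fuel_eval].
  - apply eval_CONST.
  - apply eval_SUCC, eval_SUCC. eapply eval_eq_output; [constructor|destruct xs; reflexivity].
  - apply eval_SUCC. apply (eProj P (S (S i))).
  - apply eval_COND_ORACLE.
  - set (ws := map (fun g => fuel_eval P k t n g xs) gs).
    assert (Hws : evals P (map (FUEL_EVAL k) gs) (t :: n :: xs) ws).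
    { subst ws. clear IHe. induction H; simpl; constructor; auto. }
    apply eval_MUL; [apply eval_ALL_POS; auto|].
    econstructor; [do 2 (constructor; [constructor|]); apply evals_map_PRED; eauto|].
    apply IHe. subst ws. rewrite !length_map. reflexivity.
  - destruct k as [|k']; [constructor|].
    destruct xs as [|m rest]; [discriminate|]. injection Hk as Hk'.
    econstructor.
    + do 3 (constructor; [constructor|]). apply (evals_projs_suffix P [t; n; m]); auto.
    + apply (eval_Prec_iter P _ _ _ (prec_iter (fuel_eval P k' t n e1 rest)
               (fun i a => fuel_eval P (S (S k')) t n e2 (i :: a :: rest)))); [apply IHe1; auto|].
      intro i. unfold PREC_STEP. apply eval_IF; [apply eval_NZ; constructor| |apply eval_CONST].
      econstructor; [|apply IHe2; simpl; lia].
      do 3 (constructor; [constructor|]). constructor; [apply eval_PRED; constructor|].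
      apply (evals_projs_suffix P [i; _; t; n]); auto.
  - set (V := fun i => fuel_eval P (S k) t n e (i :: xs)).
    assert (Hst := eval_MU_STEP_iter P _ k t n xs V Hk
                     (fun i => IHe (S k) t n (i :: xs) ltac:(simpl; lia))).
    apply eval_IF; [apply eval_LE; [apply eval_CONST|exact Hst]|apply eval_PRED, Hst|apply eval_CONST].
Qed.

Definition sim P e t n x := fuel_eval P 1 t n e [x].

Lemma sim_sound P e t n x : sim P e t n x = 2 -> peval (cond_oracle P (decode_cond n)) e [x] 1.
Proof. intro H. eapply fuel_eval_sound; [|exact H]. reflexivity. Qed.

Lemma sim_complete P e n x : peval (cond_oracle P (decode_cond n)) e [x] 1 ->
  exists t0, forall t, t0 <= t -> sim P e t n x = 2.
Proof. intro H. exact (fuel_eval_complete P n e [x] 1 H 1 eq_refl). Qed.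

Definition SIM e t n x := Comp (FUEL_EVAL 1 e) [t; n; x].
Lemma eval_SIM P e t n x xs a b c : eval P t xs a -> eval P n xs b -> eval P x xs c ->
  eval P (SIM e t n x) xs (sim P e a b c).
Proof. intros. eapply eval_Comp3; eauto. apply eval_FUEL_EVAL. reflexivity. Qed.

(** * Decisive conditions *)

Definition decisive (P : nat -> Prop) (e : code) (q : cond) : Prop :=
  (exists x1 x2 x3, x1 < x2 < x3 /\ x3 < len q /\
     peval (cond_oracle P q) e [x1] 1 /\ peval (cond_oracle P q) e [x2] 1 /\
     peval (cond_oracle P q) e [x3] 1 /\ sig q x1 x2 <> sig q x2 x3) \/
  (exists m, forall r x, valid r -> extends r q -> m <= x -> x < len r ->
     ~ peval (cond_oracle P r) e [x] 1).

Lemma decisive_cond_equiv P e p q : cond_equiv p q -> decisive P e p -> decisive P e q.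
Proof.
  intros Hpq [(x1&x2&x3&Hx&Hl&H1&H2&H3&Hsig)|(m&Hm)]; [left|right].
  - pose proof Hpq as (El&Es&_).
    exists x1, x2, x3. rewrite <- El, <- !Es by lia.
    repeat split; auto; lia || (eapply peval_cond_equiv; eauto).
  - exists m. intros r x Hr Hrq. apply Hm; auto. eapply cond_equiv_extends_r; eauto.
Qed.

(* Tag [0] in [a] proposes a triple and a fuel bound for the first
   alternative; any other tag proposes the bound [m] of the second, refuted
   by a [b] coding an extension, an input and a fuel bound. *)
Definition decisive_matrix P e n a b :=
  if code_nth 0 a =? 0 then
    let x1 := code_nth 1 a in let x2 := code_nth 2 a in let x3 := code_nth 3 a in
    let t := code_nth 4 a in
    (x1 <? x2) && ((x2 <? x3) && ((x3 <? len (decode_cond n)) &&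
      ((sim P e t n x1 =? 2) && ((sim P e t n x2 =? 2) && ((sim P e t n x3 =? 2) &&
       negb (Bool.eqb (sig (decode_cond n) x1 x2) (sig (decode_cond n) x2 x3)))))))
  else
    let m := code_nth 1 a in let r := code_nth 0 b in let x := code_nth 1 b in
    let t := code_nth 2 b in
    negb (validb r && (extendsb r n && ((m <=? x) && ((x <? len (decode_cond r)) &&
      (sim P e t r x =? 2))))).

Definition DECISIVE_MATRIX e :=
  let n := Proj 0 in let a := Proj 1 in let b := Proj 2 in
  let x1 := NTH (CONST 1) a in let x2 := NTH (CONST 2) a in let x3 := NTH (CONST 3) a in
  let t := NTH (CONST 4) a in
  let m := NTH (CONST 1) a in let r := NTH (CONST 0) b in let x := NTH (CONST 1) b in
  let t' := NTH (CONST 2) b in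
  IF (EQ (NTH (CONST 0) a) (CONST 0))
    (AND (LT x1 x2) (AND (LT x2 x3) (AND (LT x3 (LEN n)) (AND (EQ (SIM e t n x1) (CONST 2))
      (AND (EQ (SIM e t n x2) (CONST 2)) (AND (EQ (SIM e t n x3) (CONST 2))
        (NOT (EQ (SIG n x1 x2) (SIG n x2 x3)))))))))
    (NOT (AND (Comp VALID [r]) (AND (Comp EXTENDS [r; n]) (AND (LE m x) (AND (LT x (LEN r))
       (EQ (SIM e t' r x) (CONST 2))))))).

Lemma eval_DECISIVE_MATRIX P e n a b :
  eval P (DECISIVE_MATRIX e) [n; a; b] (b2n (decisive_matrix P e n a b)).
Proof.
  unfold DECISIVE_MATRIX, decisive_matrix. cbv zeta.
  assert (HN : forall i g v, eval P g [n;a;b] v -> eval P (NTH (CONST i) g) [n;a;b] (code_nth i v))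
    by (intros; apply eval_NTH; auto; apply eval_CONST).
  assert (Hc : eval P (EQ (NTH (CONST 0) (Proj 1)) (CONST 0)) [n;a;b] (b2n (code_nth 0 a =? 0)))
    by (apply eval_EQ; [apply HN; constructor|apply eval_CONST]).
  match goal with |- eval _ (IF _ ?g ?h) _ (b2n (if _ then ?X else ?Y)) =>
    assert (H1 : eval P g [n;a;b] (b2n X)); [|assert (H2 : eval P h [n;a;b] (b2n Y))] end.
  - repeat (apply eval_AND).
    all: try (apply eval_LT; try apply eval_LEN; try apply HN; constructor).
    all: try (apply eval_EQ; [apply eval_SIM; try apply HN; constructor | apply eval_CONST]).
    apply eval_NOT, eval_EQ_bool; apply eval_SIG; try apply HN; constructor.
  - apply eval_NOT. repeat (apply eval_AND).
    + eapply eval_Comp1; [apply HN; constructor|apply eval_VALID].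
    + eapply eval_Comp2; [apply HN; constructor|constructor|apply eval_EXTENDS].
    + apply eval_LE; apply HN; constructor.
    + apply eval_LT; [apply HN|apply eval_LEN, HN]; constructor.
    + apply eval_EQ; [apply eval_SIM; try apply HN; constructor | apply eval_CONST].
  - pose proof (eval_IF P _ _ _ _ _ _ _ Hc H1 H2) as HH. destruct (code_nth 0 a =? 0); exact HH.
Qed.

Lemma decisive_matrix_computable P e :
  computable_from P (fun k => decisive_matrix P e (code_nth 0 k) (code_nth 1 k) (code_nth 2 k) = true).
Proof.
  exists (Comp (DECISIVE_MATRIX e) [NTH (CONST 0) (Proj 0); NTH (CONST 1) (Proj 0); NTH (CONST 2) (Proj 0)]).
  intro k.
  assert (H : eval P (Comp (DECISIVE_MATRIX e)
                 [NTH (CONST 0) (Proj 0); NTH (CONST 1) (Proj 0); NTH (CONST 2) (Proj 0)])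
                 [k] (b2n (decisive_matrix P e (code_nth 0 k) (code_nth 1 k) (code_nth 2 k)))).
  { eapply eval_Comp3; try (apply eval_NTH; [apply eval_CONST|constructor]).
    apply eval_DECISIVE_MATRIX. }
  split; intro HR; [rewrite HR in H|apply not_true_is_false in HR; rewrite HR in H]; exact H.
Qed.

Lemma decisive_matrix_of_decisive P e n :
  decisive P e (decode_cond n) -> exists a, forall b, decisive_matrix P e n a b = true.
Proof.
  intros [(x1&x2&x3&Hx&Hl&H1&H2&H3&Hsig)|(m&Hm)].
  - apply sim_complete in H1 as [t1 T1], H2 as [t2 T2], H3 as [t3 T3].
    exists (encode_list [0; x1; x2; x3; max t1 (max t2 t3)]). intro b.
    unfold decisive_matrix. rewrite !code_nth_encode_list. cbn [nth Nat.eqb].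
    rewrite T1, T2, T3 by lia. rewrite (proj2 (Nat.ltb_lt _ _)), (proj2 (Nat.ltb_lt _ _)),
      (proj2 (Nat.ltb_lt _ _)) by lia.
    destruct (sig (decode_cond n) x1 x2), (sig (decode_cond n) x2 x3); simpl; congruence.
  - exists (encode_list [1; m]). intro b. unfold decisive_matrix.
    rewrite !code_nth_encode_list. cbn [nth Nat.eqb]. apply negb_true_iff, not_true_is_false.
    rewrite !andb_true_iff, validb_spec, extendsb_spec, Nat.leb_le, Nat.ltb_lt, Nat.eqb_eq.
    intros (V&X&M&L&Hs). exact (Hm _ _ V X M L (sim_sound P e _ _ _ Hs)).
Qed.

Lemma decisive_of_decisive_matrix P e n a :
  (forall b, decisive_matrix P e n a b = true) -> decisive P e (decode_cond n).
Proof.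
  intro Ha. unfold decisive_matrix in Ha. destruct (code_nth 0 a =? 0).
  - left. specialize (Ha 0). rewrite !andb_true_iff, !Nat.ltb_lt, !Nat.eqb_eq in Ha.
    destruct Ha as (L1&L2&L3&S1&S2&S3&D).
    exists (code_nth 1 a), (code_nth 2 a), (code_nth 3 a).
    repeat split; try lia; try (eapply sim_sound; eassumption).
    intro E. rewrite E, eqb_reflx in D. discriminate.
  - right. exists (code_nth 1 a). intros r x V X M L Hr.
    apply (peval_cond_equiv _ _ (decode_cond (code_cond r))) in Hr;
      [|apply cond_equiv_sym, decode_code_cond].
    destruct (sim_complete P e _ _ Hr) as [t0 Ht0].
    specialize (Ha (encode_list [code_cond r; x; t0])).
    rewrite !code_nth_encode_list in Ha. cbn [nth] in Ha.
    pose proof (decode_code_cond r) as Hrr.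
    assert (V' : validb (code_cond r) = true)
      by (apply validb_spec; eapply cond_equiv_valid; eauto).
    assert (X' : extendsb (code_cond r) n = true)
      by (apply extendsb_spec; eapply cond_equiv_extends_l; eauto).
    destruct Hrr as [Hl _].
    rewrite V', X', Ht0, Hl, (proj2 (Nat.leb_le _ _) M), (proj2 (Nat.ltb_lt _ _) L) in Ha by lia.
    discriminate.
Qed.

Lemma decisive_Sigma03 P e : Sigma03 P (fun n => decisive P e (decode_cond n)).
Proof.
  eexists. split; [apply decisive_matrix_computable|]. intro n.
  cbv beta. setoid_rewrite code_nth_encode_list. cbn [nth]. split.
  - intro H. destruct (decisive_matrix_of_decisive P e n H) as [a Ha].
    exists a; intro b; exists 0; apply Ha.
  - intros [a Ha]. apply (decisive_of_decisive_matrix P e n a).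
    intro b. destruct (Ha b) as [c Hc]. exact Hc.
Qed.

(** * Density of decisive conditions *)

(* Labels every [x >= n0] with colour [c] from [len r] on; this keeps [r]
   valid since [sig r] is only meaningful below [len r]. *)
Definition relabel_from (r : cond) (n0 : nat) (c : bool) : cond :=
  mkCond (len r) (sig r) (fun x => if x <? n0 then lab r x else (c, len r)).

Lemma relabel_from_valid r n0 c : valid r -> valid (relabel_from r n0 c).
Proof.
  intros Hv x y Hxy Hy Hz. simpl in *.
  destruct (Nat.ltb_spec x n0); [apply Hv; auto|simpl in Hz; lia].
Qed.

Lemma relabel_from_extends r q n0 c : extends r q -> len q <= n0 -> extends (relabel_from r n0 c) q.
Proof.
  intros (H1&H2&H3) Hn. split; [simpl; lia|split]; simpl; auto.
  intros x Hx. destruct (Nat.ltb_spec x n0); auto. lia.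
Qed.

Lemma sig_relabel_from r n0 c r' x y : valid r' -> extends r' (relabel_from r n0 c) ->
  n0 <= x < len r -> len r <= y < len r' -> sig r' x y = c.
Proof.
  intros Hv (_&_&Hlab) Hx Hy.
  assert (E : lab r' x = (c, len r)).
  { rewrite Hlab by (simpl; lia). simpl. destruct (Nat.ltb_spec x n0); [lia|reflexivity]. }
  replace c with (fst (lab r' x)) by (rewrite E; reflexivity).
  apply Hv; try lia. rewrite E; simpl; lia.
Qed.

Lemma decisive_dense P e p : valid p -> exists q, valid q /\ extends q p /\ decisive P e q.
Proof.
  intro Hp. apply NNPP; intro Hnone.
  assert (Hstep : forall q m, valid q -> extends q p -> exists r x, valid r /\ extends r q /\
            m <= x /\ x < len r /\ peval (cond_oracle P r) e [x] 1).
  { intros q m Hq Hqp. apply NNPP; intro Hn. apply Hnone. exists q.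
    split; [exact Hq|split; [exact Hqp|right]]. exists m. intros r x Hr Hrq Hm Hx Hacc. apply Hn; eauto 10. }
  destruct (Hstep p (len p) Hp (extends_refl p)) as (r1 & x1 & V1 & X1 & M1 & L1 & A1).
  set (r1' := relabel_from r1 (len p) false).
  assert (X1' : extends r1' p) by (apply relabel_from_extends; auto).
  destruct (Hstep r1' (len r1) (relabel_from_valid _ _ _ V1) X1')
    as (r2 & x2 & V2 & X2 & M2 & L2 & A2).
  set (r2' := relabel_from r2 (len r1) true).
  assert (X2' : extends r2' r1') by (apply relabel_from_extends; auto).
  destruct (Hstep r2' (len r2) (relabel_from_valid _ _ _ V2) (extends_trans _ _ _ X2' X1'))
    as (r3 & x3 & V3 & X3 & M3 & L3 & A3).
  assert (X31 : extends r3 r1') by (eapply extends_trans; eauto).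
  apply Hnone. exists r3. split; [exact V3|split; [eapply extends_trans; eauto|left]].
  exists x1, x2, x3. pose proof X2 as (Xl2&_). pose proof X3 as (Xl3&_). simpl in Xl2, Xl3.
  repeat split; try lia.
  - eapply peval_extends; [exact X31|exact A1].
  - eapply peval_extends; [exact X3|exact A2].
  - exact A3.
  - rewrite (sig_relabel_from r1 (len p) false r3), (sig_relabel_from r2 (len r1) true r3);
      auto; try lia; discriminate.
Qed.

(** * Generic sequences *)

Lemma peval_member P f H e r x :
  (forall x, (H x -> eval (join (coloring_set f) P) e [x] 1) /\
             (~ H x -> eval (join (coloring_set f) P) e [x] 0)) ->
  agrees f r -> peval (cond_oracle P r) e [x] 1 -> H x.
Proof.
  intros He Ha Hacc. apply (peval_join P f r _ _ _ Ha) in Hacc.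
  apply NNPP; intro Hx. apply He in Hx.
  pose proof (eval_deterministic _ _ _ _ _ Hacc Hx). discriminate.
Qed.

Section Generic_sequence.

Variable ps : nat -> cond.
Hypothesis ps_valid : forall s, valid (ps s).
Hypothesis ps_desc : forall s, extends (ps (S s)) (ps s).
Hypothesis ps_len : forall N, exists s, N <= len (ps s).

Lemma extends_chain i j : i <= j -> extends (ps j) (ps i).
Proof. induction 1; [apply extends_refl|eapply extends_trans; eauto]. Qed.

Lemma len_eventually N s : exists t, s <= t /\ N <= len (ps t).
Proof.
  destruct (ps_len N) as [s1 Hs1]. exists (max s s1). split; [lia|].
  destruct (extends_chain s1 (max s s1)) as [Hl _]; lia.
Qed.

Variable f : nat -> nat -> bool.
Hypothesis f_agrees : forall s, agrees f (ps s).

Lemma limit_stable : stable f.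
Proof.
  intro x. destruct (len_eventually (S x) 0) as [s [_ Hs]].
  exists (fst (lab (ps s) x)), (snd (lab (ps s) x)). intros u Hu Hxu.
  destruct (len_eventually (S u) s) as [t [Hst Ht]].
  destruct (extends_chain s t Hst) as (_&_&Hlab).
  rewrite (f_agrees t), <- (Hlab x) by lia. apply ps_valid; try lia. rewrite Hlab; lia.
Qed.

Lemma not_decisive_member P H e s : homogeneous f H ->
  (forall x, (H x -> eval (join (coloring_set f) P) e [x] 1) /\
             (~ H x -> eval (join (coloring_set f) P) e [x] 0)) ->
  ~ decisive P e (ps s).
Proof.
  intros (Hinf & c & Hhom) He [(x1&x2&x3&Hx&Hl&A1&A2&A3&Hsig)|(m&Hm)].
  - apply (peval_member P f H e _ _ He (f_agrees s)) in A1, A2, A3.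
    apply Hsig. rewrite <- !(f_agrees s) by lia.
    rewrite (Hhom x1 x2), (Hhom x2 x3); auto; lia.
  - destruct (Hinf m) as [x [Hmx Hx]].
    destruct (use_principle P f e [x] 1 (proj1 (He x) Hx)) as [N HN].
    destruct (len_eventually (max N (S x)) s) as [t [Hst Ht]].
    apply (Hm (ps t) x); auto; try lia; [apply extends_chain; auto|].
    apply HN; auto; lia.
Qed.

End Generic_sequence.

Theorem lemma3p3 (P : nat -> Prop) (ps : nat -> cond)
  (Hvalid : forall s, valid (ps s))
  (Hdesc : forall s, extends (ps (S s)) (ps s))
  (Hlen : forall N, exists s, N <= len (ps s))
  (Hgen : three_generic P ps)
  (f : nat -> nat -> bool)
  (Hf : forall s x y, x < y -> y < len (ps s) -> f x y = sig (ps s) x y) :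
  stable f /\
  ~ (exists H : nat -> Prop,
       homogeneous f H /\ computable_from (join (coloring_set f) P) H).
Proof.
  split; [exact (limit_stable ps Hvalid Hdesc Hlen f Hf)|].
  intros (H & Hhom & e & He).
  assert (Hcode : forall q, decisive P e (decode_cond (code_cond q)) <-> decisive P e q).
  { intro q. split; apply decisive_cond_equiv;
      [|apply cond_equiv_sym]; apply decode_code_cond. }
  destruct (Hgen _ (decisive_Sigma03 P e)) as [[s Hs]|[s Hs]].
  - rewrite Hcode in Hs. exact (not_decisive_member ps Hvalid Hdesc Hlen f Hf P H e s Hhom He Hs).
  - destruct (decisive_dense P e (ps s) (Hvalid s)) as (q & Vq & Xq & Dq).
    apply Hs. exists q. rewrite Hcode. auto.
Qed.
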